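(* If a nontrivial real Banach space $X$ has the strong diameter $2$ property, then $X^*$ contains a subspace isomorphic to $\ell_1$.
   Context: A slice of the closed unit ball $B_X$ is a set $\{x\in B_X: x^*(x)>1-\alpha\}$ with $x^*\in S_{X^*}$, $\alpha>0$. $X$ has the strong diameter $2$ property if every convex combination $\sum_{i=1}^n\lambda_iS_i$ ($n\in\mathbb{N}$, $\lambda_i\geq0$, $\sum\lambda_i=1$, $S_i$ slices of $B_X$) has diameter $2$. *)

From HB Require Import structures.
From mathcomp Require Import all_boot all_order all_algebra.
From mathcomp Require Import all_classical all_reals all_analysis.
Set Implicit Arguments. Unset Strict Implicit. Unset Printing Implicit Defensive.
Import Order.TTheory GRing.Theory Num.Theory.
Import numFieldNormedType.Exports.
Local Open Scope classical_set_scope.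
Local Open Scope ring_scope.

Section Defs.
Variables (R : realType) (X : normedModType R).

Definition unit_ball : set X := [set x : X | `|x| <= 1].

Definition is_dual (f : X -> R) : Prop :=
  (forall (a : R) (x y : X), f (a *: x + y) = a * f x + f y) /\ continuous f.

Definition dual_norm (f : X -> R) : R := sup [set `|f x| | x in unit_ball].

Definition slice (f : X -> R) (alpha : R) : set X :=
  [set x | unit_ball x /\ f x > 1 - alpha].

Definition diam (A : set X) : R :=
  sup [set `|p.1 - p.2| | p in A `*` A].

Definition conv_comb_slices (n : nat) (lam : 'I_n -> R)
    (f : 'I_n -> X -> R) (al : 'I_n -> R) : set X :=
  [set x | exists xs : 'I_n -> X,
      (forall i, slice (f i) (al i) (xs i)) /\ x = \sum_(i < n) lam i *: xs i].

Definition strong_diameter_two : Prop :=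
  forall (n : nat) (lam : 'I_n -> R) (f : 'I_n -> X -> R) (al : 'I_n -> R),
    (forall i, 0 <= lam i) -> \sum_(i < n) lam i = 1 ->
    (forall i, is_dual (f i) /\ dual_norm (f i) = 1) ->
    (forall i, 0 < al i) ->
    diam (conv_comb_slices lam f al) = 2.

Definition in_l1 (a : nat -> R) : Prop := cvgn (series (fun k => `|a k|)).
Definition l1_norm (a : nat -> R) : R := limn (series (fun k => `|a k|)).

(* X^* contains a subspace isomorphic to ell_1: there is a linear map
   T : ell_1 -> X^* which is an isomorphism onto its range *)
Definition dual_contains_l1 : Prop :=
  exists (T : (nat -> R) -> X -> R) (c C : R),
    0 < c /\ 0 < C /\
    (forall a, in_l1 a -> is_dual (T a)) /\
    (forall (k : R) a b, in_l1 a -> in_l1 b ->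
        forall x, T (fun n => k * a n + b n) x = k * T a x + T b x) /\
    (forall a, in_l1 a ->
        c * l1_norm a <= dual_norm (T a) /\ dual_norm (T a) <= C * l1_norm a).

End Defs.

(* By induction one builds norm-one functionals [y_0, y_1, ...] such that for
   every [n] and every choice of signs some [x] in the unit ball satisfies
   [sum_(i < n) +-y_i(x) >= n - 1/4]. Given [y_0, ..., y_n], slice the ball with
   the [2^(n+1)] normalized sign sums and apply the strong diameter two property
   to the equal-weight average of these slices: a norming functional of the
   difference of two far-apart points of the average is close to [1] on one
   point and to [-1] on another point of every slice, and it is the next
   functional. Hence all the [+-y_i] are at least [3/4] at a common point,
   so [a |-> sum_k a_k y_k] embeds [l_1] into the dual with
   [3/4 ||a|| <= ||sum_k a_k y_k|| <= ||a||]. The Hahn--Banach norming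
   functionals are obtained from Zorn's lemma as minimal sublinear
   functionals. *)

From HB Require Import structures.
From mathcomp Require Import all_boot all_order all_algebra.
From mathcomp Require Import all_classical all_reals all_analysis.
From mathcomp Require Import lra ring.
Set Implicit Arguments. Unset Strict Implicit. Unset Printing Implicit Defensive.
Import Order.TTheory GRing.Theory Num.Theory.
Import numFieldNormedType.Exports.
Local Open Scope classical_set_scope.
Local Open Scope ring_scope.

Section LinearForms.
Variables (R : realType) (X : normedModType R).
Implicit Types (f : X -> R) (x y : X).

Definition linear_form f := forall a x y, f (a *: x + y) = a * f x + f y.

Lemma linear_form0 f : linear_form f -> f 0 = 0.
Proof. by move=> fl; have := fl 1 0 0; rewrite scale1r addr0 mul1r; lra. Qed.

Lemma linear_formZ f a x : linear_form f -> f (a *: x) = a * f x.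
Proof. by move=> fl; have := fl a x 0; rewrite !addr0 linear_form0 // addr0. Qed.

Lemma linear_formD f x y : linear_form f -> f (x + y) = f x + f y.
Proof. by move=> fl; have := fl 1 x y; rewrite scale1r mul1r. Qed.

Lemma linear_formN f x : linear_form f -> f (- x) = - f x.
Proof. by move=> fl; rewrite -scaleN1r linear_formZ // mulN1r. Qed.

Lemma linear_formB f x y : linear_form f -> f (x - y) = f x - f y.
Proof. by move=> fl; rewrite linear_formD // linear_formN. Qed.

Lemma linear_form_sum f n (a : 'I_n -> R) (u : 'I_n -> X) : linear_form f ->
  f (\sum_(i < n) a i *: u i) = \sum_(i < n) a i * f (u i).
Proof.
move=> fl; elim: n a u => [|n IH] a u; first by rewrite !big_ord0 linear_form0.
by rewrite !big_ord_recr /= linear_formD // linear_formZ // IH.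
Qed.

Lemma linear_form_continuous f M : linear_form f ->
  (forall x, `|f x| <= M * `|x|) -> continuous f.
Proof.
move=> fl fM x; apply/cvgrPdist_lt => e e0.
have M1 : 0 < `|M| + 1 by rewrite ltr_wpDl.
apply/nbhs_normP; exists (e / (`|M| + 1)); first exact: divr_gt0.
move=> y /= xy; rewrite -linear_formB //; apply: le_lt_trans (fM _) _.
apply: le_lt_trans (ler_wpM2r (normr_ge0 _) (ler_norm M)) _.
rewrite ltr_pdivlMr // in xy; apply: le_lt_trans xy.
by rewrite mulrC ler_wpM2l // lerDl.
Qed.

Lemma dual_norm_le f M : (forall x, `|x| <= 1 -> `|f x| <= M) -> dual_norm f <= M.
Proof.
move=> fM; apply: ge_sup => [|_ [x xb <-]]; last exact: fM.
by exists `|f 0|, 0; rewrite // /unit_ball /= normr0.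
Qed.

Lemma le_dual_norm f M x : (forall y, `|y| <= 1 -> `|f y| <= M) ->
  `|x| <= 1 -> `|f x| <= dual_norm f.
Proof.
move=> fM xb; apply: ub_le_sup; last by exists x.
by exists M => _ [y yb <-]; exact: fM.
Qed.

Lemma dual_norm_divr f M c : 0 < c -> (forall x, `|x| <= 1 -> `|f x| <= M) ->
  dual_norm (fun x => f x / c) = dual_norm f / c.
Proof.
move=> c0 fM.
have normfc x : `|f x / c| = `|f x| / c by rewrite normrM normfV (gtr0_norm c0).
have fcM x : `|x| <= 1 -> `|f x / c| <= M / c.
  by move=> xb; rewrite normfc ler_pM2r ?invr_gt0 ?fM.
apply/eqP; rewrite eq_le; apply/andP; split.
  apply: dual_norm_le => x xb; rewrite normfc ler_pM2r ?invr_gt0 //.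
  exact: le_dual_norm fM xb.
rewrite ler_pdivrMr //; apply: dual_norm_le => x xb.
by rewrite -ler_pdivrMr // -normfc; exact: le_dual_norm fcM xb.
Qed.

Lemma normalized_form_dual f M : linear_form f ->
    (forall x, `|f x| <= M * `|x|) -> 0 < dual_norm f ->
  let g x := f x / dual_norm f in is_dual g /\ dual_norm g = 1.
Proof.
move=> fl fM N0 g; have fball x : `|x| <= 1 -> `|f x| <= `|M|.
  move=> xb; apply: le_trans (fM x) (le_trans (ler_wpM2r _ (ler_norm M)) _) => //.
  by rewrite ler_piMr.
split; last by rewrite /g (dual_norm_divr N0 fball) divff ?gt_eqF.
have gl : linear_form g by move=> a x y; rewrite /g fl mulrDl mulrA.
split=> //; apply: (linear_form_continuous (M := M / dual_norm f)) => // x.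
by rewrite /g normrM normfV (gtr0_norm N0) mulrAC ler_pM2r ?invr_gt0.
Qed.

Definition contractive_form f := linear_form f /\ forall x, `|f x| <= `|x|.

End LinearForms.

Section HahnBanach.
Variables (R : realType) (X : normedModType R).
Implicit Types (p q : X -> R) (x y : X).

Definition sublinear p :=
  (forall x y, p (x + y) <= p x + p y) /\
  (forall c x, 0 <= c -> p (c *: x) <= c * p x).

Lemma sublinear0 p : sublinear p -> p 0 = 0.
Proof.
move=> [pD pZ]; apply/eqP; rewrite eq_le; apply/andP; split.
  by have := pZ 0 0 (lexx _); rewrite scale0r mul0r.
by have := pD 0 0; rewrite addr0 -lerBlDl subrr.
Qed.

Lemma sublinear_ge_oppN p x : sublinear p -> - p (- x) <= p x.
Proof. by move=> sp; have := sp.1 x (- x); rewrite subrr sublinear0 //; lra. Qed.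

Lemma sublinearZ p c x : sublinear p -> 0 <= c -> p (c *: x) = c * p x.
Proof.
move=> sp; rewrite le_eqVlt => /orP[/eqP <-|c0].
  by rewrite scale0r mul0r sublinear0.
apply/eqP; rewrite eq_le sp.2 ?(ltW c0) //=.
have := sp.2 c^-1 (c *: x); rewrite invr_ge0 (ltW c0) scalerA mulVf ?gt_eqF //.
by rewrite scale1r -(ler_pM2l c0) mulrA mulfV ?gt_eqF // mul1r => /(_ isT).
Qed.

(* The largest sublinear functional below [p] whose value at [- x0] is at
   most [- p x0]; a minimal [p] must therefore be odd. *)
Definition shift_inf p x0 y : R :=
  inf [set p (y + t *: x0) - t * p x0 | t in [set t : R | 0 <= t]].

Lemma shift_inf_le p x0 y t : sublinear p -> 0 <= t ->
  shift_inf p x0 y <= p (y + t *: x0) - t * p x0.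
Proof.
move=> sp t0; apply: ge_inf; last by exists t.
exists (- p (- y)) => _ [s s0 <-].
by have := sp.1 (y + s *: x0) (- y); rewrite addrC addKr sublinearZ //; lra.
Qed.

Lemma shift_inf_glb p x0 y a :
  (forall t, 0 <= t -> a <= p (y + t *: x0) - t * p x0) -> a <= shift_inf p x0 y.
Proof.
move=> h; apply: lb_le_inf => [|_ [t t0 <-]]; last exact: h.
by exists (p y), 0; rewrite /= ?lexx // scale0r addr0 mul0r subr0.
Qed.

Lemma shift_inf_le_self p x0 y : sublinear p -> shift_inf p x0 y <= p y.
Proof.
by move=> sp; have := shift_inf_le x0 y sp (lexx 0); rewrite scale0r addr0 mul0r subr0.
Qed.

Lemma shift_inf_oppr p x0 : sublinear p -> shift_inf p x0 (- x0) <= - p x0.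
Proof.
move=> sp; have := shift_inf_le x0 (- x0) sp ler01.
by rewrite scale1r addNr sublinear0 // mul1r sub0r.
Qed.

Lemma shift_inf_sublinear p x0 : sublinear p -> sublinear (shift_inf p x0).
Proof.
move=> sp; split=> [y1 y2|c y].
  suff h t2 : 0 <= t2 -> shift_inf p x0 (y1 + y2) - (p (y2 + t2 *: x0) - t2 * p x0)
                          <= shift_inf p x0 y1.
    have : shift_inf p x0 (y1 + y2) - shift_inf p x0 y1 <= shift_inf p x0 y2.
      by apply: shift_inf_glb => t2 /h; lra.
    lra.
  move=> t20; apply: shift_inf_glb => t1 t10.
  have := shift_inf_le x0 (y1 + y2) sp (addr_ge0 t10 t20).
  have := sp.1 (y1 + t1 *: x0) (y2 + t2 *: x0).
  by rewrite addrACA -scalerDl; lra.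
rewrite le_eqVlt => /orP[/eqP <-|c0].
  by rewrite scale0r mul0r -(sublinear0 sp) shift_inf_le_self.
rewrite -ler_pdivrMl //; apply: shift_inf_glb => t t0.
rewrite ler_pdivrMl // mulrBr mulrA -sublinearZ ?(ltW c0) // scalerDr scalerA.
exact: shift_inf_le (mulr_ge0 (ltW c0) t0).
Qed.

Lemma chain_inf_sublinear q (A : set (X -> R)) : sublinear q -> A !=set0 ->
    (forall p, A p -> sublinear p /\ forall x, p x <= q x) ->
    (forall p r, A p -> A r -> (forall x, p x <= r x) \/ (forall x, r x <= p x)) ->
  sublinear (fun x => inf [set p x | p in A]) /\
  forall p, A p -> forall x, inf [set p x | p in A] <= p x.
Proof.
move=> sq [p0 Ap0] Asub Atot; pose m x := inf [set p x | p in A].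
have m_le p x : A p -> m x <= p x.
  move=> Ap; apply: ge_inf; last by exists p.
  exists (- q (- x)) => _ [r Ar <-]; have [sr rq] := Asub r Ar.
  by have := sublinear_ge_oppN x sr; have := rq (- x); lra.
have m_glb x a : (forall p, A p -> a <= p x) -> a <= m x.
  move=> h; apply: lb_le_inf => [|_ [p Ap <-]]; last exact: h.
  by exists (p0 x), p0.
split; last by move=> p Ap x; exact: m_le.
split=> [x y|c x].
  have mxy p r : A p -> A r -> m (x + y) <= p x + r y.
    move=> Ap Ar; have [pr|rp] := Atot p r Ap Ar.
      have := (Asub p Ap).1.1 x y; have := pr y; have := m_le p (x + y) Ap; lra.
    have := (Asub r Ar).1.1 x y; have := rp x; have := m_le r (x + y) Ar; lra.
  suff : m (x + y) - m x <= m y by lra.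
  apply: (m_glb) => r Ar; suff : m (x + y) - r y <= m x by lra.
  by apply: (m_glb) => p Ap; have := mxy p r Ap Ar; lra.
rewrite le_eqVlt => /orP[/eqP <-|c0].
  by rewrite scale0r mul0r -(sublinear0 (Asub p0 Ap0).1) m_le.
rewrite -ler_pdivrMl //; apply: (m_glb) => p Ap.
by rewrite ler_pdivrMl // -sublinearZ ?(ltW c0) ?m_le //; exact: (Asub p Ap).1.
Qed.

Lemma exists_minimal_sublinear q : sublinear q -> exists p, sublinear p /\
  (forall x, p x <= q x) /\
  forall r, sublinear r -> (forall x, r x <= p x) -> forall x, p x <= r x.
Proof.
move=> sq; pose T := {p : X -> R | sublinear p /\ forall x, p x <= q x}.
pose below (s t : T) := `[< forall x, sval t x <= sval s x >].
have [[p [sp pq]] pmin] : exists t, premaximal below t.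
  apply: (@ZL_preorder _ (exist _ q (conj sq (fun=> lexx _))) below).
  - by move=> t; apply/asboolP => x.
  - by move=> r s t /asboolP rs /asboolP st; apply/asboolP => x; exact: le_trans (rs x).
  move=> A Atot; pose B := [set sval t | t in A].
  have [[t0 At0]|A0] := pselect (A !=set0); last first.
    by exists (exist _ q (conj sq (fun=> lexx _))) => t At; case: A0; exists t.
  have BP : B !=set0 by exists (sval t0), t0.
  have Bsub p : B p -> sublinear p /\ forall x, p x <= q x.
    by case=> t _ <-; exact: (svalP t).
  have Btot p r : B p -> B r -> (forall x, p x <= r x) \/ (forall x, r x <= p x).
    move=> [s As <-] [t At <-].
    by case: (Atot s t As At) => /asboolP; [right | left].
  have [sm mle] := chain_inf_sublinear sq BP Bsub Btot.
  set m := fun x => _ in sm mle.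
  have mq x : m x <= q x.
    exact: le_trans (mle _ (ex_intro2 _ _ t0 At0 erefl) x) ((svalP t0).2 x).
  exists (exist _ m (conj sm mq)) => t At; apply/asboolP => x /=.
  by apply: mle; exists t.
exists p; do 2!split=> //; move=> r sr rp x.
have rq y : r y <= q y by exact: le_trans (rp y) (pq y).
by have /asboolP := pmin (exist _ r (conj sr rq)) (asboolT rp); apply.
Qed.

Lemma minimal_sublinear_linear p : sublinear p ->
    (forall r, sublinear r -> (forall x, r x <= p x) -> forall x, p x <= r x) ->
  linear_form p.
Proof.
move=> sp pmin.
have pN x : p (- x) = - p x.
  have := pmin _ (shift_inf_sublinear x sp) (shift_inf_le_self x ^~ sp) (- x).
  by have := shift_inf_oppr x sp; have := sublinear_ge_oppN x sp; lra.
have pD x y : p (x + y) = p x + p y.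
  by have := sp.1 x y; have := sp.1 (- x) (- y); rewrite -opprD !pN; lra.
move=> a x y; rewrite pD; congr (_ + _).
have [a0|a0] := leP 0 a; first exact: sublinearZ.
have -> : a *: x = (- a) *: (- x) by rewrite scalerN scaleNr opprK.
by rewrite sublinearZ ?pN ?mulrNN // oppr_ge0 ltW.
Qed.

Lemma norming_functional (z : X) : exists2 f, contractive_form f & f z = `|z|.
Proof.
have sN : sublinear (fun x : X => `|x|).
  by split=> [x y|c x c0]; [exact: ler_normD | rewrite normrZ ger0_norm].
have [p [sp [pq pmin]]] := exists_minimal_sublinear (shift_inf_sublinear z sN).
have pl := minimal_sublinear_linear sp pmin.
have p_le x : p x <= `|x| := le_trans (pq x) (shift_inf_le_self z x sN).
exists p; first split=> // x.
  by rewrite ler_norml p_le andbT -lerNl -linear_formN // -normrN p_le.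
apply/eqP; rewrite eq_le p_le /=.
by have := pq (- z); rewrite linear_formN //; have := shift_inf_oppr z sN; lra.
Qed.

End HahnBanach.

Section StrongDiameterTwo.
Variables (R : realType) (X : normedModType R).
Hypothesis sd2 : strong_diameter_two X.

Lemma strong_diameter_two_far_pair n (lam : 'I_n -> R) (f : 'I_n -> X -> R)
    (al : 'I_n -> R) eta :
  (forall i, 0 <= lam i) -> \sum_(i < n) lam i = 1 ->
  (forall i, is_dual (f i) /\ dual_norm (f i) = 1) -> (forall i, 0 < al i) ->
  0 < eta -> exists w1 w2, conv_comb_slices lam f al w1 /\
    conv_comb_slices lam f al w2 /\ 2 - eta < `|w1 - w2|.
Proof.
move=> lam0 lam1 fn al0 eta0; have := sd2 lam0 lam1 fn al0; rewrite /diam.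
set D := [set _ | _ in _] => D2.
have supD : has_sup D.
  apply/not_notP => nsup; move: D2; rewrite sup_out // => /eqP.
  by rewrite eq_sym pnatr_eq0.
have [_ [[w1 w2] [/= w1S w2S] <-]] := sup_adherent eta0 supD.
by rewrite D2 => ?; exists w1, w2.
Qed.

(* Averaging the slices with equal weights, a single norming functional of
   [w1 - w2] almost attains [1] on [w1] and [-1] on [w2], hence on every
   summand of both convex combinations. *)
Lemma strong_diameter_two_antipodal m (g : 'I_m -> X -> R) (al : 'I_m -> R) delta :
  (0 < m)%N -> (forall j, is_dual (g j) /\ dual_norm (g j) = 1) ->
  (forall j, 0 < al j) -> 0 < delta ->
  exists2 h, contractive_form h & forall j, exists u v,
    [/\ slice (g j) (al j) u, slice (g j) (al j) v, 1 - delta < h u & h v < delta - 1].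
Proof.
move=> m0 gn al0 delta0; have mR : 0 < m%:R :> R by rewrite ltr0n.
pose lam (j : 'I_m) := (m%:R : R)^-1.
have lam0 j : 0 <= lam j by rewrite invr_ge0 ler0n.
have lam1 : \sum_(j < m) lam j = 1.
  by rewrite /lam sumr_const card_ord -[LHS]mulr_natr mulVf ?gt_eqF.
have [w1 [w2 [[u [uS ->]] [[v [vS ->]] far]]]] :=
  strong_diameter_two_far_pair lam0 lam1 gn al0 (divr_gt0 delta0 mR).
have [h [hl hb] hw] := norming_functional ((\sum_j lam j *: u j) - \sum_j lam j *: v j).
exists h => // j.
pose dd k := h (u k) - h (v k).
have dd_le2 k : dd k <= 2.
  move: (uS k).1 (vS k).1 (hb (u k)) (hb (v k)).
  by rewrite /unit_ball /= /dd !ler_norml; lra.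
have sum_dd : 2 * m%:R - delta < \sum_k dd k.
  have hsum : h ((\sum_k lam k *: u k) - \sum_k lam k *: v k) = m%:R^-1 * \sum_k dd k.
    rewrite (linear_formB _ _ hl) !(linear_form_sum _ _ hl) mulr_sumr.
    by under [RHS]eq_bigr do rewrite mulrBr; rewrite sumrB.
  move: far; rewrite -hw hsum ltr_pdivlMl //.
  by have -> : m%:R * (2 - delta / m%:R) = 2 * m%:R - delta by field; rewrite gt_eqF.
have : 2 - dd j <= \sum_k (2 - dd k).
  rewrite (bigD1 j) //= lerDl; apply: sumr_ge0 => k _; have := dd_le2 k; lra.
rewrite sumrB sumr_const card_ord -mulr_natr => ddj.
move: (uS j).1 (vS j).1 (hb (u j)) (hb (v j)).
rewrite /unit_ball /= !ler_norml /dd in ddj * => ub vb hu hv.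
by exists (u j), (v j); split=> //; lra.
Qed.

End StrongDiameterTwo.

Section SignSums.
Variables (R : realType) (X : normedModType R).

Definition sign (b : bool) : R := if b then 1 else -1.

Lemma normr_sign_mul b (r : R) : `|sign b * r| = `|r|.
Proof. by case: b; rewrite /sign ?mul1r ?mulN1r ?normrN. Qed.

Lemma sign_mul_le1 b (r : R) : `|r| <= 1 -> sign b * r <= 1.
Proof. by rewrite -(normr_sign_mul b); apply: le_trans (ler_norm _). Qed.

(* [n - defect n] is the value forced on the sign sums of the first [n]
   functionals; [defect] increases to [1/4], so each single functional
   keeps a margin of [3/4]. *)
Definition defect (n : nat) : R := (1 - 2^-1 ^+ n) / 4.

Lemma defect0 : defect 0 = 0.
Proof. by rewrite /defect expr0 subrr mul0r. Qed.

Lemma defectS n : defect n.+1 = defect n + 2^-1 ^+ n / 8.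
Proof. by rewrite /defect exprS; field. Qed.

Lemma defect_ge0 n : 0 <= defect n.
Proof.
have : 2^-1 ^+ n <= 1 :> R by rewrite exprn_ile1 ?invr_ge0 // invf_le1 // ler1n.
by rewrite /defect; lra.
Qed.

Lemma defect_le n : defect n <= 4^-1.
Proof.
have : 0 <= 2^-1 ^+ n :> R by rewrite exprn_ge0 // invr_ge0.
by rewrite /defect; lra.
Qed.

Definition sign_sum (y : nat -> X -> R) n (s : nat -> bool) (x : X) : R :=
  \sum_(i < n) sign (s i) * y i x.

Definition sign_attained (y : nat -> X -> R) n := forall s : nat -> bool,
  exists x : X, `|x| <= 1 /\ n%:R - defect n <= sign_sum y n s x.

Definition set_form (y : nat -> X -> R) n (f : X -> R) i := if i == n then f else y i.

Lemma sign_sum_set y n f s x :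
  sign_sum (set_form y n f) n.+1 s x = sign_sum y n s x + sign (s n) * f x.
Proof.
rewrite /sign_sum big_ord_recr /set_form /= eqxx; congr (_ + _).
by apply: eq_bigr => i _; rewrite ltn_eqF.
Qed.

Lemma sign_attained0 y : sign_attained y 0.
Proof. by move=> s; exists 0; rewrite normr0 /sign_sum big_ord0 defect0 subrr. Qed.

Lemma sign_attained_prefix y y' n : (forall i, (i < n)%N -> y' i = y i) ->
  sign_attained y n -> sign_attained y' n.
Proof.
move=> yy' yn s; have [x [xb xs]] := yn s; exists x; split=> //.
suff -> : sign_sum y' n s x = sign_sum y n s x by [].
by apply: eq_bigr => i _; rewrite yy'.
Qed.

Variable y : nat -> X -> R.
Hypothesis y_contr : forall i, contractive_form (y i).

Lemma sign_sum_linear n s : linear_form (sign_sum y n s).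
Proof.
move=> a x x'; rewrite /sign_sum mulr_sumr -big_split /=; apply: eq_bigr => i _.
by rewrite (y_contr i).1; ring.
Qed.

Lemma sign_sum_le n s x : `|sign_sum y n s x| <= n%:R * `|x|.
Proof.
apply: le_trans (ler_norm_sum _ _ _) _; rewrite -[n in n%:R]card_ord -sumr_const.
by rewrite mulr_suml; apply: ler_sum => i _; rewrite normr_sign_mul mul1r (y_contr i).2.
Qed.

End SignSums.
Arguments sign {R} b.
Arguments defect {R} n.

Section Step.
Variables (R : realType) (X : normedModType R) (y : nat -> X -> R).
Hypothesis y_contr : forall i, contractive_form (y i).

Lemma sign_attained_one (z : X) : z != 0 ->
  exists2 f, contractive_form f & sign_attained (set_form y 0 f) 1.
Proof.
move=> z0; have [f fc fz] := norming_functional z; exists f => // s.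
have nz : 0 < `|z| by rewrite normr_gt0.
have normsign : `|sign (s 0%N) : R| = 1 by case: (s 0%N); rewrite /sign ?normrN normr1.
exists (sign (s 0%N) *: (`|z|^-1 *: z)); split.
  by rewrite !normrZ normsign mul1r normfV normr_id mulVf ?gt_eqF.
rewrite sign_sum_set /sign_sum big_ord0 add0r !(linear_formZ _ _ fc.1) fz.
rewrite mulVf ?gt_eqF // mulr1; have := defect_ge0 R 1.
by case: (s 0%N); rewrite /sign; lra.
Qed.

Lemma sign_sum_dual_norm n s : sign_attained y n ->
  n%:R - defect n <= dual_norm (sign_sum y n s) <= n%:R.
Proof.
have ssle x : `|x| <= 1 -> `|sign_sum y n s x| <= n%:R.
  move=> xb; apply: le_trans (sign_sum_le y_contr n s x) _.
  by rewrite ler_piMr ?ler0n.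
move=> /(_ s) [x [xb xs]]; rewrite dual_norm_le // andbT.
by apply: le_trans xs (le_trans (ler_norm _) (le_dual_norm ssle xb)).
Qed.

Definition pattern_seq n (p : {ffun 'I_n.+1 -> bool}) (i : nat) := p (inord i).

Lemma sign_sum_pattern n (s : nat -> bool) x :
  sign_sum y n.+1 (pattern_seq [ffun i : 'I_n.+1 => s i]) x = sign_sum y n.+1 s x.
Proof. by apply: eq_bigr => i _; rewrite /pattern_seq ffunE inord_val. Qed.

Lemma sign_attained_step n : strong_diameter_two X -> sign_attained y n.+1 ->
  exists2 f, contractive_form f & sign_attained (set_form y n.+1 f) n.+2.
Proof.
move=> sd2 yn; pose P := {ffun 'I_n.+1 -> bool}.
pose F (j : 'I_#|{: P}|) := sign_sum y n.+1 (pattern_seq (enum_val j)).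
pose N j := dual_norm (F j).
have /all_and2[Nlb Nub] j : n.+1%:R - defect n.+1 <= N j /\ N j <= n.+1%:R.
  by apply/andP; exact: sign_sum_dual_norm.
have N0 j : 0 < N j.
  have : 1 <= n.+1%:R :> R by rewrite ler1n.
  by have := Nlb j; have := defect_le R n.+1; lra.
pose g j x := F j x / N j.
have g_dual j : is_dual (g j) /\ dual_norm (g j) = 1.
  exact: normalized_form_dual (sign_sum_linear y_contr _ _) (sign_sum_le y_contr _ _) (N0 j).
pose d : R := 2^-1 ^+ n.+1 / 8.
have d0 : 0 < d by rewrite divr_gt0 // exprn_gt0 // invr_gt0.
pose al (j : 'I_#|{: P}|) := d / (2 * n.+1%:R).
have al0 j : 0 < al j by rewrite divr_gt0 // mulr_gt0 // ltr0n.
have [|f fc fsep] := strong_diameter_two_antipodal sd2 _ g_dual al0 (divr_gt0 d0 (ltr0n R 2)).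
  by apply/card_gt0P; exists [ffun=> true].
exists f => // s; pose j := enum_rank [ffun i : 'I_n.+1 => s i].
have [u [v [[ub gu] [vb gv] fu fv]]] := fsep j.
exists (if s n.+1 then u else v); split; first by case: (s n.+1).
have Fs x : sign_sum y n.+1 s x = N j * g j x.
  by rewrite mulrC divfK ?gt_eqF // /F enum_rankK sign_sum_pattern.
have Nal : N j * al j <= d / 2.
  apply: le_trans (ler_wpM2r (ltW (al0 j)) (Nub j)) _.
  by rewrite le_eqVlt /al; apply/orP; left; apply/eqP; field; rewrite -mulrS pnatr_eq0.
set x := if s n.+1 then u else v.
have gx : 1 - al j < g j x by rewrite /x; case: (s n.+1).
have fx : 1 - d / 2 < sign (s n.+1) * f x.
  by rewrite /x /sign; case: (s n.+1); lra.
have Ng : N j - d / 2 <= N j * g j x.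
  apply: le_trans (ler_wpM2l (ltW (N0 j)) (ltW gx)); rewrite mulrBr mulr1; lra.
rewrite sign_sum_set Fs defectS -/d -addn1 natrD.
by have := Nlb j; lra.
Qed.

End Step.

Section SignSequence.
Variables (R : realType) (X : normedModType R).

Lemma contractive_form0 : contractive_form (fun _ : X => 0 : R).
Proof. by split=> [a x y|x]; rewrite ?mulr0 ?addr0 ?normr0. Qed.

Lemma exists_sign_sequence : (exists z : X, z != 0) -> strong_diameter_two X ->
  exists Y : nat -> X -> R, (forall i, contractive_form (Y i)) /\
    forall n, sign_attained Y n.
Proof.
move=> [z z0] sd2.
have [next nextP] : exists next : nat -> (nat -> X -> R) -> X -> R, forall n y,
    (forall i, contractive_form (y i)) -> sign_attained y n ->
    contractive_form (next n y) /\ sign_attained (set_form y n (next n y)) n.+1.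
  suff /boolp.choice[next nextP] : forall ny : nat * (nat -> X -> R),
      exists f, (forall i, contractive_form (ny.2 i)) -> sign_attained ny.2 ny.1 ->
        contractive_form f /\ sign_attained (set_form ny.2 ny.1 f) ny.1.+1.
    by exists (fun n y => next (n, y)) => n y; exact: nextP (n, y).
  move=> [n y] /=.
  have [[yc yn]|] := pselect ((forall i, contractive_form (y i)) /\ sign_attained y n).
    have [f fc fn] : exists2 f, contractive_form f & sign_attained (set_form y n f) n.+1.
      by case: n yn => [|n] yn; [exact: sign_attained_one z0 | exact: sign_attained_step].
    by exists f.
  by move=> nyn; exists 0 => yc yn; case: nyn.
pose fix F (n : nat) : nat -> X -> R :=
  if n is m.+1 then set_form (F m) m (next m (F m)) else fun _ _ => 0.
have FP n : (forall i, contractive_form (F n i)) /\ sign_attained (F n) n.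
  elim: n => [|n [Fc Fn]].
    by split=> [i|]; [exact: contractive_form0 | exact: sign_attained0].
  have [nc nn] := nextP n (F n) Fc Fn; split=> // i /=.
  by rewrite /set_form; case: (i == n).
have Fstable m i : (i < m)%N -> F m i = F i.+1 i.
  elim: m => [//|m IH]; rewrite ltnS leq_eqVlt => /orP[/eqP -> //|im].
  by rewrite /= /set_form ltn_eqF // IH.
exists (fun i => F i.+1 i); split=> [i|n]; first exact: (FP i.+1).1.
by apply: sign_attained_prefix (FP n).2 => i /Fstable.
Qed.

Lemma sign_attained_margin (Y : nat -> X -> R) N :
  (forall i, contractive_form (Y i)) -> sign_attained Y N ->
  forall s, exists x : X, `|x| <= 1 /\ forall i, (i < N)%N -> 3 / 4 <= sign (s i) * Y i x.
Proof.
move=> Yc YN s; have [x [xb xs]] := YN s; exists x; split=> // i iN.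
have le1 k : sign (s k) * Y k x <= 1.
  by apply: sign_mul_le1; exact: le_trans ((Yc k).2 x) xb.
have : \sum_(k < N) (1 - sign (s k) * Y k x) <= 4^-1.
  rewrite sumrB sumr_const card_ord -[_ *+ N]mulr_natr mul1r.
  by have := defect_le R N; move: xs; rewrite /sign_sum; lra.
have : 1 - sign (s i) * Y i x <= \sum_(k < N) (1 - sign (s k) * Y k x).
  rewrite (bigD1 (Ordinal iN)) //= lerDl; apply: sumr_ge0 => k _.
  by have := le1 k; lra.
lra.
Qed.

End SignSequence.

Section Ell1Embedding.
Variables (R : realType) (X : normedModType R) (Y : nat -> X -> R).
Hypothesis Y_contr : forall i, contractive_form (Y i).

Lemma l1_norm_ge_series (a : nat -> R) n :
  in_l1 a -> series (fun k => `|a k|) n <= l1_norm a.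
Proof.
move=> a1; apply: (nondecreasing_cvgn_le _ a1) => m p mp.
by rewrite /series /= (big_cat_nat _ mp) //= lerDl sumr_ge0.
Qed.

Lemma l1_norm_ge0 (a : nat -> R) : in_l1 a -> 0 <= l1_norm a.
Proof. by move=> a1; apply: le_trans (l1_norm_ge_series 0 a1); rewrite /series /= big_geq. Qed.

Lemma lim_series_lincomb (u v : nat -> R) c :
  cvgn (series u) -> cvgn (series v) ->
  limn (series (fun k => c * u k + v k)) = c * limn (series u) + limn (series v).
Proof.
move=> cu cv; have -> : series (fun k => c * u k + v k) =
    (fun n => c * series u n + series v n).
  by apply/funext => n; rewrite /series /= big_split -mulr_sumr.
by apply: cvg_lim => //; apply: cvgD => //; exact: cvgMl_tmp.
Qed.

Definition ell1_form (a : nat -> R) (x : X) : R := limn (series (fun k => a k * Y k x)).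

Lemma cvg_ell1_form (a : nat -> R) x : in_l1 a -> cvgn (series (fun k => a k * Y k x)).
Proof.
move=> a1; apply: normed_cvg; apply: (series_le_cvg (v_ := fun k => `|x| * `|a k|)).
- by move=> k /=.
- by move=> k; rewrite mulr_ge0.
- by move=> k /=; rewrite normrM mulrC ler_wpM2r // (Y_contr k).2.
by have := is_cvg_seriesZ (k := `|x|) a1; congr (cvgn (series _)).
Qed.

Lemma ell1_form_linear (a : nat -> R) : in_l1 a -> linear_form (ell1_form a).
Proof.
move=> a1 c x x'; rewrite /ell1_form -lim_series_lincomb; try exact: cvg_ell1_form.
congr (limn (series _)).
by apply/funext => k; rewrite (Y_contr k).1; ring.
Qed.

Lemma ell1_formD k (a b : nat -> R) x : in_l1 a -> in_l1 b ->
  ell1_form (fun n => k * a n + b n) x = k * ell1_form a x + ell1_form b x.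
Proof.
move=> a1 b1; rewrite /ell1_form -lim_series_lincomb; try exact: cvg_ell1_form.
congr (limn (series _)).
by apply/funext => n; ring.
Qed.

Lemma ell1_form_le (a : nat -> R) x : in_l1 a -> `|ell1_form a x| <= l1_norm a * `|x|.
Proof.
move=> a1; pose L := l1_norm a * `|x|.
have /all_and2[lo hi] n : - L <= series (fun k => a k * Y k x) n /\
    series (fun k => a k * Y k x) n <= L.
  apply/andP; rewrite -ler_norml; apply: le_trans (ler_norm_sum _ _ _) _.
  apply: le_trans (ler_wpM2r (normr_ge0 x) (l1_norm_ge_series n a1)).
  rewrite /series /= mulr_suml; apply: ler_sum => k _.
  by rewrite normrM ler_wpM2l // (Y_contr k).2.
have cvgx := cvg_ell1_form (x := x) a1.
by rewrite ler_norml; apply/andP; split; [apply: limr_ge cvgx _ | apply: limr_le cvgx _];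
  exact: nearW.
Qed.

Lemma ell1_form_bounded (a : nat -> R) x : in_l1 a -> `|x| <= 1 -> `|ell1_form a x| <= l1_norm a.
Proof.
move=> a1 xb; apply: le_trans (ell1_form_le x a1) _.
by rewrite ler_piMr ?l1_norm_ge0.
Qed.

Hypothesis Y_margin : forall N (s : nat -> bool), exists x : X,
  `|x| <= 1 /\ forall i, (i < N)%N -> 3 / 4 <= sign (s i) * Y i x.

(* Testing [ell1_form a] at a point where the first [N] forms follow the signs
   of [a] gives [3/4] of the first [N] terms, minus the tail of the series. *)
Lemma dual_norm_ell1_form_ge_partial (a : nat -> R) N : in_l1 a ->
  7 / 4 * series (fun k => `|a k|) N - l1_norm a <= dual_norm (ell1_form a).
Proof.
move=> a1; pose S := series (fun k => `|a k|).
have [x [xb xN]] := Y_margin N (fun k => 0 <= a k).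
have head : 3 / 4 * S N <= series (fun k => a k * Y k x) N.
  rewrite /S /series /= mulr_sumr !big_mkord; apply: ler_sum => k _.
  have := xN k (ltn_ord k); rewrite /sign.
  by case: (leP 0 (a k)) => ak; [rewrite mul1r ger0_norm | rewrite mulN1r ltr0_norm]; nra.
have bounded y : `|y| <= 1 -> `|ell1_form a y| <= l1_norm a by exact: ell1_form_bounded.
apply: le_trans (le_trans (ler_norm _) (le_dual_norm bounded xb)).
apply: limr_ge (cvg_ell1_form (x := x) a1) _; near=> n.
have Nn : (N <= n)%N by near: n; exact: nbhs_infty_ge.
have tail : `|\sum_(N <= k < n) a k * Y k x| <= \sum_(N <= k < n) `|a k|.
  apply: le_trans (ler_norm_sum _ _ _) _; apply: ler_sum => k _.
  by rewrite normrM ler_piMr // (le_trans ((Y_contr k).2 x)).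
have := l1_norm_ge_series n a1; move: head tail.
rewrite /S /series /= !(big_cat_nat (leq0n N) Nn) /= ler_norml => head /andP[tail _].
lra.
Unshelve. all: by end_near.
Qed.

Lemma dual_norm_ell1_form_ge (a : nat -> R) : in_l1 a ->
  3 / 4 * l1_norm a <= dual_norm (ell1_form a).
Proof.
move=> a1; suff : l1_norm a <= 4 / 7 * (dual_norm (ell1_form a) + l1_norm a) by lra.
apply: (limr_le a1); apply: nearW => N.
by have := dual_norm_ell1_form_ge_partial N a1; lra.
Qed.

End Ell1Embedding.

Unset Implicit Arguments.

Theorem corollary3p7 (R : realType) (X : completeNormedModType R) :
  (exists x : X, x != 0) -> strong_diameter_two X -> dual_contains_l1 X.
Proof.
move=> nontrivial sd2.
have [Y [Yc Ysign]] := exists_sign_sequence nontrivial sd2.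
have Ymargin N := sign_attained_margin Yc (Ysign N).
exists (ell1_form Y), (3 / 4), 1; do 2!(split; first lra).
split=> [a a1|]; first split.
- exact: ell1_form_linear.
- exact: linear_form_continuous (ell1_form_linear Yc a1) (fun x => ell1_form_le Yc x a1).
split=> [k a b a1 b1 x|a a1]; first exact: ell1_formD.
split; first by have := dual_norm_ell1_form_ge Yc Ymargin a1.
by rewrite mul1r dual_norm_le // => x; exact: ell1_form_bounded.
Qed.
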